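(* Let $R$ be a finite commutative ring with identity. If the involutory Cayley graph $\Gamma(R)$ has genus exactly $1$, then $\Gamma(R)$ is connected and $4$-regular.
   Context: All rings are finite, commutative, with nonzero identity. The involutory Cayley graph $\Gamma(R)$ is the simple graph with vertex set $R$ in which distinct $x,y$ are adjacent iff $(x-y)^2=1$. Genus means the orientable genus of a graph (the least number of handles of a sphere on which it embeds without crossings). *)

From HB Require Import structures.
From mathcomp Require Import all_boot all_order all_algebra all_fingroup.
Set Implicit Arguments. Unset Strict Implicit. Unset Printing Implicit Defensive.
Import GRing.Theory.
Local Open Scope ring_scope.

Definition invCayley (R : finComNzRingType) : rel R :=
  fun x y => (x != y) && ((x - y) ^+ 2 == 1).

Local Open Scope nat_scope.

Section Genus.
Variables (T : finType) (e : rel T).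

Definition dart (d : T * T) : bool := e d.1 d.2.

Definition rotation_system (s : {perm (T * T)}) : Prop :=
  [/\ forall d, ~~ dart d -> s d = d,
      forall d, dart d -> dart (s d) /\ (s d).1 = d.1
    & forall d d', dart d -> dart d' -> d.1 = d'.1 -> fconnect s d d'].

Definition face_perm (s : {perm (T * T)}) (d : T * T) : T * T := s (d.2, d.1).

Definition n_isolated : nat := #|[pred x : T | [forall y, ~~ e x y]]|.

(* number of faces of the embedding given by s; an isolated vertex
   contributes one face *)
Definition n_faces (s : {perm (T * T)}) : nat :=
  n_comp (frel (face_perm s)) dart + n_isolated.

Definition n_vertices : nat := #|T|.
Definition n_edges : nat := #|[pred d | dart d]| %/ 2.
Definition n_components : nat := n_comp e predT.

(* Orientable genus (via Heffter-Edmonds-Ringel rotation systems and Euler's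
   formula V - E + F = 2c - 2g, summing over components):
   g is the minimum, over rotation systems, of (2c - V + E - F)/2. *)
Definition has_genus (g : nat) : Prop :=
  (exists s, rotation_system s /\
     2 * n_components + n_edges = n_vertices + n_faces s + 2 * g) /\
  (forall s, rotation_system s ->
     n_vertices + n_faces s + 2 * g <= 2 * n_components + n_edges).

End Genus.

Definition connected_graph (T : finType) (e : rel T) : Prop :=
  forall x y : T, connect e x y.

Definition regular_graph (T : finType) (e : rel T) (k : nat) : Prop :=
  forall x : T, #|[pred y | e x y]| = k.

(* Write S = {u | u^2 = 1}.  The graph is the Cayley graph of (R, +) with
   connection set S, hence |S|-regular, and S is a group of exponent 2 under
   multiplication, so |S| is a power of 2 by Cauchy's theorem.

   The components are translates of each other,
   so the rotations of one component r can be copied to all of them; by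
   minimality of the genus this gives V_r + F_r <= E_r + 1 for the faces F_r of
   any rotation system on r.  The face permutation is the product of the dart
   reversal and the rotation, and comparing signs gives F_r = E_r + V_r
   (mod 2), hence V_r + F_r <= E_r.  Summing over the c components and using
   Euler's formula 2c + E = V + F + 2 yields c = 1.

   For a connected k-regular graph of genus 1, Euler's formula reads E = V + F
   with F >= 1, and faces have length at least 3, so 3F <= 2E = kV.  Hence
   2 < k <= 6, and the only power of 2 in this range is 4. *)

From HB Require Import structures.
From mathcomp Require Import all_boot all_order all_algebra all_fingroup.
From mathcomp Require Import pgroup cyclic zify.

Set Implicit Arguments.
Unset Strict Implicit.
Unset Printing Implicit Defensive.
Import GRing.Theory.

Section FunctionOrbits.
Variable X : finType.
Implicit Types (f g h : X -> X) (A : {pred X}).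

Lemma fcard_conj f g h A :
  injective f -> injective g -> injective h -> fclosed f A ->
  {in [preim h of A], forall y, h (g y) = f (h y)} ->
  fcard f A = fcard g [preim h of A].
Proof.
move=> injf injg injh clA hg; have symg := fconnect_sym injg.
apply: (adjunction_n_comp h (fconnect_sym injf) symg clA).
apply: strict_adjunction => //; first by apply/subsetP => x _; apply: injF_onto.
by move=> y z /negbNE hyA /=; rewrite -hg // (inj_eq injh).
Qed.

Lemma eq_in_fcard f g A :
  injective f -> injective g -> fclosed f A -> {in A, f =1 g} ->
  fcard f A = fcard g A.
Proof.
by move=> injf injg clA fg; rewrite (@fcard_conj f g id) // => x /fg.
Qed.

Lemma fcard_order_ge n f A :
  injective f -> fclosed f A -> {in A, forall x, n <= fingraph.order f x} ->
  fcard f A * n <= #|A|.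
Proof.
move=> injf clA leAn; have symf := fconnect_sym injf.
pose B := [pred x in A | froots f x].
have rootB x : x \in A -> froot f x \in B.
  by move=> Ax; rewrite inE -(closed_connect clA (connect_root _ x)) Ax roots_root.
have -> : fcard f A = #|B| by apply: eq_card => x; rewrite !inE andbC.
rewrite -sum_nat_const -sum1_card [leqRHS](partition_big (froot f) [in B]) //=.
apply: leq_sum => r /andP[Ar /eqP rr]; rewrite (leq_trans (leAn r Ar)) //.
rewrite sum1_card; apply: subset_leq_card; apply/subsetP => x; rewrite !inE => rx.
by rewrite unfold_in /= -(closed_connect clA rx) Ar -{1}rr (root_connect symf) symf.
Qed.

Lemma fcard_involution h A :
  involutive h -> fclosed h A -> {in A, forall x, h x != x} ->
  fcard h A * 2 = #|A|.
Proof.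
move=> hK clA nfix; apply: fcard_order_set => //; first exact: inv_inj.
apply/subsetP => x Ax; rewrite inE (@order_cycle _ _ [:: x; h x]) //.
- by rewrite /cycle /= hK !eqxx.
- by rewrite /= inE andbT eq_sym nfix.
- exact: mem_head.
Qed.

Lemma card_preim_inj f (B : {pred X}) :
  injective f -> #|[preim f of B]| = #|B|.
Proof.
by move=> injf; rewrite card_preim //; apply: eq_card => x; rewrite !inE injF_onto.
Qed.

End FunctionOrbits.

Section PermOrbits.
Variable X : finType.
Implicit Types (p : {perm X}) (A : {pred X}).

Lemma porbit_fconnect p x y : (y \in porbit p x) = fconnect p x y.
Proof.
apply/porbitP/idP => [[i ->]|/iter_findex <-]; first by rewrite permX fconnect_iter.
by exists (findex p x y); rewrite permX.
Qed.

Lemma card_porbits p A : fclosed p A -> {in [predC A], p =1 id} ->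
  #|porbits p| = fcard p A + #|[predC A]|.
Proof.
move=> clA fixA; have symp := fconnect_sym (@perm_inj _ p).
have -> : porbits p = porbit p @: [set x | froots p x].
  apply/setP => P; apply/imsetP/imsetP => -[x xR ->]; last by exists x.
  exists (froot p x); rewrite ?inE ?roots_root //.
  by apply/eqP; rewrite eq_porbit_mem porbit_fconnect symp connect_root.
rewrite card_in_imset => [|x y]; last first.
  rewrite !inE => /eqP rx /eqP ry /eqP; rewrite eq_porbit_mem porbit_fconnect.
  by rewrite -(root_connect symp) rx ry => /eqP.
have -> : #|[set x | froots p x]| = fcard p X.
  by apply: eq_card => x; rewrite !inE andbT.
rewrite (n_compC A); congr (_ + _).
by rewrite (@eq_in_fcard _ p id) ?fcard_id //; [exact: perm_inj | exact: predC_closed].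
Qed.
End PermOrbits.


Section RestrictPerm.
Variables (X : finType) (f : X -> X) (A : {pred X}).
Hypotheses (injf : injective f) (clA : fclosed f A).

Definition restrict_fun x := if x \in A then f x else x.

Lemma restrict_fun_inj : injective restrict_fun.
Proof.
have fA x : (f x \in A) = (x \in A) by rewrite -(fclosed1 clA).
rewrite /restrict_fun => x y; case: ifP => Ax; case: ifP => Ay.
- exact: injf.
- by move=> fxy; rewrite -fxy fA Ax in Ay.
- by move=> fxy; rewrite fxy fA Ay in Ax.
- by [].
Qed.

Definition restrict_perm := perm restrict_fun_inj.

Lemma restrict_permE x : restrict_perm x = if x \in A then f x else x.
Proof. by rewrite permE. Qed.

Lemma odd_restrict_perm :
  odd_perm restrict_perm = odd #|X| (+) odd (fcard f A + #|[predC A]|).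
Proof.
have clrA : fclosed restrict_perm A.
  move=> x _ /eqP <-; rewrite restrict_permE.
  by case: ifP => // Ax; rewrite -(fclosed1 clA).
rewrite /odd_perm (card_porbits clrA) => [|x]; last first.
  by rewrite inE restrict_permE => /negbTE ->.
rewrite (@eq_in_fcard _ _ f) //; first exact: perm_inj.
by move=> x Ax; rewrite restrict_permE Ax.
Qed.

End RestrictPerm.

Definition rev_dart (T : Type) (d : T * T) : T * T := (d.2, d.1).

Lemma rev_dartK (T : Type) : involutive (@rev_dart T).
Proof. by case. Qed.

Section SimpleGraph.
Variables (T : finType) (e : rel T).
Hypothesis e_sym : symmetric e.

Definition darts_in (A : {pred T}) : pred (T * T) :=
  [pred d | dart e d && (d.1 \in A)].

Lemma dart_rev d : dart e (rev_dart d) = dart e d.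
Proof. exact: e_sym. Qed.

Lemma card_partition_comp (X : finType) (lab : X -> T) (P : {pred X}) :
  #|P| = \sum_(r | roots e r) #|[pred x in P | connect e r (lab x)]|.
Proof.
have csym := sym_connect_sym e_sym.
rewrite -sum1_card (partition_big (fun x => fingraph.root e (lab x)) (roots e)) => [|x _].
  apply: eq_bigr => r /eqP rr; rewrite sum1_card; apply: eq_card => x.
  by rewrite unfold_in !inE -[X in _ == X]rr (root_connect csym) csym.
exact: roots_root.
Qed.

Lemma n_comp_roots : n_components e = #|[pred r | roots e r]|.
Proof. by apply: eq_card => r; rewrite !inE andbT. Qed.

Lemma n_edgesE : n_edges e = #|dart e| %/ 2.
Proof. by rewrite /n_edges; congr (_ %/ 2); apply: eq_card. Qed.

Lemma connected_n_comp1 : n_components e = 1 -> connected_graph e.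
Proof.
have csym := sym_connect_sym e_sym.
move=> c1 x y; apply/(fingraph.rootP csym).
have /card_le1_eqP root_eq : #|[pred r | roots e r]| <= 1 by rewrite -n_comp_roots c1.
by apply: root_eq; rewrite inE roots_root.
Qed.

Hypothesis e_irr : irreflexive e.

Lemma n_edges_double : n_edges e * 2 = #|dart e|.
Proof.
rewrite n_edgesE -(@fcard_involution _ (@rev_dart T)) ?mulnK //.
- exact: rev_dartK.
- by move=> d _ /eqP <-; rewrite !unfold_in; have := dart_rev d; rewrite /dart => ->.
- case=> x y; rewrite unfold_in => exy.
  by apply: contraTneq exy => -[->]; rewrite /dart e_irr.
Qed.

Lemma n_isolated0 : (forall x, exists y, e x y) -> n_isolated e = 0.
Proof.
move=> no_isolated; apply: eq_card0 => x; rewrite !inE; apply/forallP => nx.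
by have [y] := no_isolated x; rewrite (negbTE (nx y)).
Qed.

Section Regular.
Variable k : nat.
Hypothesis e_reg : regular_graph e k.

Lemma card_dart_regular : #|dart e| = #|T| * k.
Proof.
rewrite -sum1_card -sum_nat_const.
rewrite (eq_bigl (fun d => predT d.1 && e d.1 d.2)) //.
rewrite -(pair_big_dep predT e (fun _ _ => 1)).
by apply: eq_bigr => x _; rewrite sum1_card -(e_reg x).
Qed.

Lemma regular_no_isolated : 0 < k -> forall x, exists y, e x y.
Proof.
by move=> k_gt0 x; move: k_gt0; rewrite -(e_reg x) => /card_gt0P[y]; exists y.
Qed.

Lemma regular_two_neighbours :
  1 < k -> forall x y, e x y -> exists2 z, e x z & z != y.
Proof.
move=> k_gt1 x y exy; move: k_gt1; rewrite -(e_reg x) (cardD1 y) inE exy.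
by case/card_gt0P=> z; rewrite !inE => /andP[zy exz]; exists z.
Qed.

End Regular.

Section RotationSystem.
Variable s : {perm (T * T)}.
Hypothesis rs : rotation_system e s.
Notation fp := (face_perm s).

Lemma rot_fst d : (s d).1 = d.1.
Proof.
by case: rs => fix_s dart_s _; case: (boolP (dart e d)) => [/dart_s[]|/fix_s->].
Qed.

Lemma rot_dart d : dart e (s d) = dart e d.
Proof.
case: rs => fix_s dart_s _.
by case: (boolP (dart e d)) => [/dart_s[->]|/[dup]/fix_s->/negbTE->].
Qed.

Lemma iter_rot_fst n d : (iter n s d).1 = d.1.
Proof. by elim: n => //= n IH; rewrite rot_fst. Qed.

Lemma face_perm_inj : injective fp.
Proof. by move=> [a b] [a' b'] /perm_inj [-> ->]. Qed.

Lemma face_perm_fst d : (fp d).1 = d.2.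
Proof. exact: rot_fst. Qed.

Lemma face_perm_dart d : dart e (fp d) = dart e d.
Proof. by rewrite /face_perm rot_dart dart_rev. Qed.

Lemma rot_fixed_dart d d' :
  dart e d -> dart e d' -> d.1 = d'.1 -> s d = d -> d' = d.
Proof.
case: rs => _ _ cycle_s Dd Dd' dd' sd.
have /iter_findex <- := cycle_s d d' Dd Dd' dd'.
by elim: (findex _ _ _) => //= n ->.
Qed.

Lemma face_perm_dart_closed : fclosed fp (dart e).
Proof.
by move=> d _ /eqP <-; rewrite !unfold_in; have := face_perm_dart d; rewrite /dart => ->.
Qed.

Section ClosedSet.
Variable A : {pred T}.
Hypothesis clA : closed e A.
Notation D := (darts_in A).

Lemma rot_closed : fclosed s D.
Proof. by move=> d _ /eqP <-; rewrite !inE rot_dart rot_fst. Qed.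

Lemma rev_dart_closed : fclosed (@rev_dart T) D.
Proof.
move=> [x y] _ /eqP <-; rewrite !inE dart_rev /=.
by case Dd: (dart e _) => //=; apply: clA.
Qed.

Lemma face_perm_closed : fclosed fp D.
Proof.
move=> d _ /eqP <-; rewrite !inE face_perm_dart face_perm_fst.
by case Dd: (dart e d) => //=; apply: clA.
Qed.

Lemma fcard_rev_dart : fcard (@rev_dart T) D * 2 = #|D|.
Proof.
apply: fcard_involution rev_dart_closed _; first exact: rev_dartK.
case=> x y; rewrite !inE => /andP[exy _].
by apply: contraTneq exy => -[->]; rewrite /dart /= e_irr.
Qed.

Hypothesis no_isolated : {in A, forall x, exists y, e x y}.

Lemma fcard_rot : fcard s D = #|A|.
Proof.
have symr := fconnect_sym (@perm_inj _ s).
have -> : fcard s D = #|[set d | froots s d && (d \in D)]|.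
  by apply: eq_card => d; rewrite !inE.
rewrite -(@card_in_imset _ _ fst) => [|d d']; last first.
  rewrite !inE => /and3P[/eqP rd Dd _] /and3P[/eqP rd' Dd' _] dd'.
  by rewrite -rd -rd'; apply/(fingraph.rootP symr); case: rs => _ _; apply.
apply: eq_card => x; apply/imsetP/idP => [[d]|Ax].
  by rewrite !inE => /and3P[_ _ ?] ->.
have [y exy] := no_isolated Ax; have xy_root := connect_root (frel s) (x, y).
exists (froot s (x, y)); last by rewrite -(iter_findex xy_root) iter_rot_fst.
by rewrite inE roots_root // -(closed_connect rot_closed xy_root) !inE /dart /= exy.
Qed.

Lemma odd_fcard_face_perm :
  odd (fcard fp D) = odd (#|D| %/ 2) (+) odd #|A|.
Proof.
pose rot := restrict_perm (@perm_inj _ s) rot_closed.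
pose rev := restrict_perm (inv_inj (@rev_dartK T)) rev_dart_closed.
pose face := restrict_perm face_perm_inj face_perm_closed.
have face_rev_rot : face = (rev * rot)%g.
  apply/permP => d; rewrite permM !restrict_permE.
  by case Dd: (d \in D); rewrite ?Dd // -(fclosed1 rev_dart_closed) Dd.
have := odd_permM rev rot; rewrite -face_rev_rot !odd_restrict_perm.
rewrite fcard_rot -(cardC D) -fcard_rev_dart mulnK // !oddD oddM andbF.
by case: (odd (fcard fp D)); case: (odd (fcard _ D)); case: (odd #|A|);
  case: (odd #|[predC D]|).
Qed.

End ClosedSet.

Hypothesis two_neighbours : forall x y, e x y -> exists2 z, e x z & z != y.

Lemma face_order_ge3 d : dart e d -> 3 <= fingraph.order fp d.
Proof.
move=> Dd.
have fp1 : fp d != d.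
  apply: contraTneq Dd => /(congr1 fst).
  by rewrite face_perm_fst /dart => <-; rewrite e_irr.
have fp2 : fp (fp d) != d.
  apply/eqP => fp2d.
  have fpd : fp d = rev_dart d.
    move/(congr1 fst): fp2d; rewrite face_perm_fst => fpd2.
    by rewrite [LHS]surjective_pairing face_perm_fst fpd2.
  have [z ez zd] : exists2 z, e d.2 z & z != d.1 by apply: two_neighbours; rewrite e_sym.
  have := @rot_fixed_dart (rev_dart d) (d.2, z); rewrite dart_rev => /(_ Dd ez erefl fpd).
  by case=> zd1; rewrite zd1 eqxx in zd.
have := iter_order face_perm_inj d.
case: (fingraph.order fp d) (fingraph.order_gt0 fp d) => [|[|[|n]]] //= _ /eqP.
  by rewrite (negbTE fp1).
by rewrite (negbTE fp2).
Qed.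

Lemma fcard_face_perm_leq : 3 * fcard fp (dart e) <= #|dart e|.
Proof.
rewrite mulnC; apply: fcard_order_ge face_perm_inj face_perm_dart_closed _.
exact: face_order_ge3.
Qed.

Lemma n_faces_sum : (forall x, exists y, e x y) ->
  n_faces e s = \sum_(r | roots e r) fcard fp (darts_in (connect e r)).
Proof.
move=> no_isolated; rewrite /n_faces n_isolated0 // addn0 /n_comp_mem.
rewrite (card_partition_comp fst); apply: eq_bigr => r _.
by apply: eq_card => d; rewrite !inE andbA.
Qed.

End RotationSystem.

Lemma genus1_regular_deg k : regular_graph e k -> n_components e = 1 ->
  has_genus e 1 -> 2 < k <= 6.
Proof.
move=> e_reg c1 [[s [rs euler]] _].
have edges : n_edges e * 2 = #|T| * k by rewrite n_edges_double (card_dart_regular e_reg).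
have {}euler : n_edges e = #|T| + n_faces e s by move: euler; rewrite c1 /n_vertices; lia.
have T_gt0 : 0 < #|T|.
  have : 0 < n_components e by rewrite c1.
  by rewrite n_comp_roots => /card_gt0P[x _]; apply/card_gt0P; exists x.
have F_gt0 : 0 < fcard (face_perm s) (dart e).
  apply/(fcard_gt0P (@face_perm_inj s) (face_perm_dart_closed rs)).
  by apply/card_gt0P; rewrite -n_edges_double; lia.
have k_gt2 : 2 < k.
  by rewrite -(ltn_pmul2l T_gt0); move: euler; rewrite /n_faces; lia.
rewrite k_gt2 /= -(leq_pmul2l T_gt0).
have := fcard_face_perm_leq rs (regular_two_neighbours e_reg (ltnW k_gt2)).
rewrite -n_edges_double; move: euler; rewrite /n_faces n_isolated0; first lia.
by apply: regular_no_isolated e_reg _; lia.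
Qed.

End SimpleGraph.

Section TranslationInvariantGraph.
Variables (V : finZmodType) (e : rel V).
Hypotheses (e_sym : symmetric e) (e_irr : irreflexive e).
Hypothesis e_shift : forall t x y, e (x + t)%R (y + t)%R = e x y.
Local Open Scope ring_scope.

Definition shift_dart (t : V) (d : V * V) := (d.1 + t, d.2 + t).

Lemma shift_dartK t : cancel (shift_dart t) (shift_dart (- t)).
Proof. by case=> x y; rewrite /shift_dart /= !addrK. Qed.

Lemma shift_dartNK t : cancel (shift_dart (- t)) (shift_dart t).
Proof. by case=> x y; rewrite /shift_dart /= !subrK. Qed.

Lemma shift_dart_inj t : injective (shift_dart t).
Proof. exact: can_inj (shift_dartK t). Qed.

Lemma dart_shift t d : dart e (shift_dart t d) = dart e d.
Proof. exact: e_shift. Qed.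

Lemma connect_shift t x y : connect e (x + t) (y + t) = connect e x y.
Proof.
suff {x y} le_shift u x y : connect e x y -> connect e (x + u) (y + u).
  by apply/idP/idP => [/(le_shift (- t))|/le_shift //]; rewrite !addrK.
case/connectP=> p; elim: p x => [x _ ->|z p IHp x /andP[exz /IHp zy] /zy].
  exact: connect0.
by apply: connect_trans; apply: connect1; rewrite e_shift.
Qed.

Lemma darts_in_shift r r' :
  [preim shift_dart (r' - r) of darts_in e (connect e r')] =i
    darts_in e (connect e r).
Proof.
by case=> x y; rewrite !inE /= -(connect_shift (r' - r) r) subrKC /dart /= e_shift.
Qed.

Lemma card_comp r r' : #|connect e r'| = #|connect e r|.
Proof.
rewrite -(card_preim_inj _ (addIr (r' - r))); apply: eq_card => x.
by rewrite !inE -(connect_shift (r' - r) r) subrKC.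
Qed.

Lemma card_darts_in_comp r r' :
  #|darts_in e (connect e r')| = #|darts_in e (connect e r)|.
Proof.
rewrite -(card_preim_inj _ (@shift_dart_inj (r' - r))).
exact: eq_card (darts_in_shift r r').
Qed.

Section Transplant.
Variables (s0 : {perm (V * V)}) (r0 : V).
Hypothesis rs0 : rotation_system e s0.

Let tau (x : V) := fingraph.root e x - r0.

Definition transplant_fun d :=
  shift_dart (tau d.1) (s0 (shift_dart (- tau d.1) d)).

Lemma transplant_fst d : (transplant_fun d).1 = d.1.
Proof. by rewrite /= (rot_fst rs0) /= subrK. Qed.

Lemma transplant_inj : injective transplant_fun.
Proof.
move=> d d' eq_dd'.
have eq1 : d.1 = d'.1 by rewrite -transplant_fst eq_dd' transplant_fst.
by move: eq_dd'; rewrite /transplant_fun eq1 => /shift_dart_inj/perm_inj/shift_dart_inj.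
Qed.

Definition transplant := perm transplant_inj.

Lemma iter_transplant n d :
  iter n transplant d =
    shift_dart (tau d.1) (iter n s0 (shift_dart (- tau d.1) d)).
Proof.
elim: n => [|n IHn] /=; first by rewrite shift_dartNK.
by rewrite IHn permE /transplant_fun /= (iter_rot_fst rs0) /= subrK shift_dartK.
Qed.

Lemma transplant_rotation : rotation_system e transplant.
Proof.
case: rs0 => fix0 dart0 cycle0; split.
- by move=> d nDd; rewrite permE /transplant_fun fix0 ?shift_dartNK // dart_shift.
- move=> d Dd; rewrite permE transplant_fst; split => //.
  by rewrite dart_shift; case: (dart0 (shift_dart (- tau d.1) d)); rewrite ?dart_shift.
- move=> d d' Dd Dd' dd'.
  have sh : fconnect s0 (shift_dart (- tau d.1) d) (shift_dart (- tau d.1) d').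
    by apply: cycle0; rewrite ?dart_shift //= dd'.
  rewrite -(shift_dartNK (tau d.1) d') -(iter_findex sh) -iter_transplant.
  exact: fconnect_iter.
Qed.

Lemma fcard_transplant r : roots e r ->
  fcard (face_perm transplant) (darts_in e (connect e r)) =
  fcard (face_perm s0) (darts_in e (connect e r0)).
Proof.
move=> /eqP rr; set t := r - r0.
rewrite (@fcard_conj _ _ (face_perm s0) (shift_dart t)); last first.
- case=> x y; rewrite !inE /= => /andP[exy rxt].
  have tau_yt : tau (y + t) = t.
    rewrite /tau -[RHS]/(r - r0) -[in RHS]rr; congr (_ - _).
    apply/esym/(fingraph.rootP (sym_connect_sym e_sym)).
    exact: connect_trans rxt (connect1 exy).
  by rewrite /face_perm permE /transplant_fun /= tau_yt /shift_dart /= !addrK.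
- have clr := connect_closed (sym_connect_sym e_sym) r.
  exact: (face_perm_closed e_sym transplant_rotation clr).
- exact: shift_dart_inj.
- exact: face_perm_inj.
- exact: face_perm_inj.
- exact: eq_n_comp_r (darts_in_shift r0 r).
Qed.

End Transplant.
Local Close Scope ring_scope.

Hypothesis no_isolated : forall x, exists y, e x y.

Lemma sum_roots_const (a : nat) : \sum_(r | roots e r) a = n_components e * a.
Proof. by rewrite sum_nat_const n_comp_roots. Qed.

Lemma n_components_gt0 : 0 < n_components e.
Proof.
rewrite n_comp_roots; apply/card_gt0P; exists (fingraph.root e 0%R).
by rewrite inE; apply: roots_root; apply: sym_connect_sym.
Qed.

Lemma card_vertices r : #|V| = n_components e * #|connect e r|.
Proof.
rewrite -sum_roots_const (card_partition_comp e_sym id predT) /=.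
by apply: eq_bigr => r' _; rewrite -(card_comp r r'); apply: eq_card.
Qed.

Lemma card_darts r : #|dart e| = n_components e * #|darts_in e (connect e r)|.
Proof.
rewrite -sum_roots_const (card_partition_comp e_sym fst (dart e)) /=.
by apply: eq_bigr => r' _; rewrite -(card_darts_in_comp r r'); apply: eq_card.
Qed.

Lemma comp_faces_le s r :
  (forall s', rotation_system e s' ->
     #|V| + n_faces e s' + 2 <= 2 * n_components e + n_edges e) ->
  rotation_system e s -> roots e r ->
  #|connect e r| + fcard (face_perm s) (darts_in e (connect e r)) <=
    #|darts_in e (connect e r)| %/ 2.
Proof.
move=> nonplanar rs rr; have clr := connect_closed (sym_connect_sym e_sym) r.
set c := n_components e; set m := #|connect e r|.
set D := darts_in e _; set F := fcard _ D.
have [half Dhalf] : exists half, #|D| = half * 2.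
  by exists (fcard (@rev_dart V) D); rewrite fcard_rev_dart.
have parity : odd F = odd half (+) odd m.
  by rewrite (odd_fcard_face_perm e_sym e_irr rs clr (in1W no_isolated)) Dhalf mulnK.
have nE : n_edges e = c * half.
  by rewrite n_edgesE (card_darts r) -/D Dhalf mulnA mulnK.
have := nonplanar _ (transplant_rotation r rs).
rewrite (n_faces_sum e_sym) // (eq_bigr _ (fun r' => fcard_transplant r rs (r := r'))).
rewrite sum_roots_const (card_vertices r) nE -/c -/m -/F => ineq.
have : c * (m + F) < c * (half + 2) by rewrite !mulnDr; lia.
rewrite ltn_pmul2l ?n_components_gt0 // Dhalf mulnK // addn2 ltnS leq_eqVlt.
case/orP => [/eqP mF|]; last by rewrite ltnS.
by have := congr1 odd mF; rewrite oddD /= parity; case: (odd m); case: (odd half).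
Qed.

Lemma genus1_n_comp : has_genus e 1 -> n_components e = 1.
Proof.
case=> -[s0 [rs0 euler]] minimal.
set r0 := fingraph.root e 0%R.
have faces_le : n_vertices V + n_faces e s0 <= n_edges e.
  rewrite /n_vertices (n_faces_sum e_sym) // (card_vertices r0).
  rewrite -sum_roots_const -big_split /=.
  apply: (@leq_trans (\sum_(r | roots e r) #|darts_in e (connect e r)| %/ 2)).
    apply: leq_sum => r rr; rewrite (card_comp r r0).
    exact: comp_faces_le minimal rs0 rr.
  rewrite (eq_bigr _ (fun r _ => congr1 (divn^~ 2) (card_darts_in_comp r0 r))).
  rewrite sum_roots_const n_edgesE (card_darts r0).
  by rewrite leq_divRL // -mulnA leq_mul2l leq_trunc_div orbT.
by have := n_components_gt0; lia.
Qed.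

End TranslationInvariantGraph.

Section SquareRootsOfUnity.
Variable R : finComNzRingType.

Definition sqrt1 : {set R} := [set u | (u ^+ 2 == 1)%R].

Lemma sqrt1M u v : u \in sqrt1 -> v \in sqrt1 -> (u * v)%R \in sqrt1.
Proof. by rewrite !inE exprMn => /eqP-> /eqP->; rewrite mulr1. Qed.

Lemma sqrt1_1 : 1%R \in sqrt1.
Proof. by rewrite inE expr1n. Qed.

Definition sqrt1_group := {u : R | u \in sqrt1}.

HB.instance Definition _ := Finite.copy sqrt1_group {u : R | u \in sqrt1}.

Definition sqrt1_mul (u v : sqrt1_group) : sqrt1_group :=
  exist _ (val u * val v)%R (sqrt1M (valP u) (valP v)).

Definition sqrt1_one : sqrt1_group := exist _ 1%R sqrt1_1.

Lemma sqrt1_mulA : associative sqrt1_mul.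
Proof. by move=> u v w; apply: val_inj; rewrite /= mulrA. Qed.

Lemma sqrt1_mul1 : left_id sqrt1_one sqrt1_mul.
Proof. by move=> u; apply: val_inj; rewrite /= mul1r. Qed.

Lemma sqrt1_mulV : left_inverse sqrt1_one id sqrt1_mul.
Proof.
by move=> u; apply: val_inj; rewrite /= -expr2; apply/eqP; have := valP u; rewrite inE.
Qed.

HB.instance Definition _ :=
  Finite_isGroup.Build sqrt1_group sqrt1_mulA sqrt1_mul1 sqrt1_mulV.

Lemma card_sqrt1_pow2 : exists k, #|sqrt1| = 2 ^ k.
Proof.
have -> : #|sqrt1| = #|[set: sqrt1_group]| by rewrite cardsT card_sig.
have two_nat : 2.-nat #|[set: sqrt1_group]|.
  apply/pnatP; first by apply/card_gt0P; exists 1%g; rewrite inE.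
  move=> p p_pr /(Cauchy p_pr)[u _ ou]; rewrite inE.
  have : p %| 2.
    by rewrite -ou order_dvdn expgS expg1; apply/eqP; exact: sqrt1_mulV.
  by rewrite dvdn_prime2 // => /eqP.
by have [k ->] := p_natP two_nat; exists k.
Qed.

End SquareRootsOfUnity.

Section InvolutoryCayley.
Variable R : finComNzRingType.
Local Notation e := (@invCayley R).
Local Open Scope ring_scope.

Lemma invCayleyE x y : e x y = (x - y \in sqrt1 R).
Proof.
rewrite /invCayley inE; case: eqP => [->|] //=.
by rewrite subrr expr0n /= eq_sym oner_eq0.
Qed.

Lemma invCayley_sym : symmetric e.
Proof. by move=> x y; rewrite !invCayleyE !inE -opprB sqrrN. Qed.

Lemma invCayley_irr : irreflexive e.
Proof. by move=> x; rewrite /invCayley eqxx. Qed.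

Lemma invCayley_shift t x y : e (x + t) (y + t) = e x y.
Proof. by rewrite !invCayleyE opprD addrACA subrr addr0. Qed.

Lemma invCayley_no_isolated x : exists y, e x y.
Proof. by exists (x - 1); rewrite invCayleyE subKr sqrt1_1. Qed.

Lemma invCayley_regular : regular_graph e #|sqrt1 R|.
Proof.
move=> x; rewrite -[RHS](card_preim_inj _ (can_inj (subKr x))).
by apply: eq_card => y; rewrite !inE /= invCayleyE inE.
Qed.

End InvolutoryCayley.

Theorem mainTheorem2 (R : finComNzRingType) :
  has_genus (@invCayley R) 1 ->
  connected_graph (@invCayley R) /\ regular_graph (@invCayley R) 4.
Proof.
move=> genus1; have e_sym := @invCayley_sym R; have e_irr := @invCayley_irr R.
have c1 := genus1_n_comp e_sym e_irr (@invCayley_shift R)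
  (@invCayley_no_isolated R) genus1.
split; first exact: connected_n_comp1 e_sym c1.
have [k card_pow2] := card_sqrt1_pow2 R.
have := genus1_regular_deg e_sym e_irr (@invCayley_regular R) c1 genus1.
rewrite card_pow2 => deg_bounds; suff k2 : k = 2.
  by have := @invCayley_regular R; rewrite card_pow2 k2.
case: k {card_pow2} deg_bounds => [|[|[|k]]] // deg_bounds.
by have := expn_gt0 2 k; move: deg_bounds; rewrite !expnS; lia.
Qed.
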